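(* With the notation of the context, the POVM $\{E_j\}_{j\in A}$ (on the support of $\Sigma=\sum_j\sigma_j$, completed arbitrarily on its orthogonal complement) maximizes the average success probability $\frac{1}{|A|}\sum_{j\in A}\mathrm{tr}(F_j\sigma_j)$ over all POVMs $\{F_j\}_{j\in A}$ for distinguishing the equiprobable states $\{\sigma_j\}_{j\in A}$.
   Context: $A$ finite abelian group, $p$ prime, $\varphi\in\mathrm{Aut}(A)$ with $\varphi^p=\mathrm{id}$, $|G|:=p|A|$, $k\ge1$. $\{\chi_x\}_{x\in A}$ are the characters of $A$ with $\chi_x\chi_{x'}=\chi_{x+x'}$, $\chi_x(y)=\chi_y(x)$. For $b\in\{0,\dots,p-1\}$, $\Phi_b:=\sum_{i=0}^{b-1}\varphi^i$ and $\hat\Phi_b:A\to A$ is a function with $\chi_x(\Phi_b(d))=\chi_{\hat\Phi_b(x)}(d)$ for all $x,d$. For $x\in A^k$, $b\in\mathbb{Z}_p^k$: $\hat\Phi_b(x):=\sum_j\hat\Phi_{b_j}(x_j)$, $S^x_w:=\{b:\hat\Phi_b(x)=w\}$, $\eta^x_w:=|S^x_w|$, $|S^x_w\rangle$ the normalized uniform superposition over $S^x_w$ (zero if empty). $\sigma_d:=\frac{1}{|G|^k}\sum_{x}\sum_{w,v}\chi_w(d)\overline{\chi_v(d)}\sqrt{\eta^x_w\eta^x_v}|x,S^x_w\rangle\langle x,S^x_v|$ and $E_j:=\frac{1}{|A|}\sum_x\sum_{w,v}\chi_w(j)\overline{\chi_v(j)}|x,S^x_w\rangle\langle x,S^x_v|$.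 *)

From HB Require Import structures.
From mathcomp Require Import all_boot all_order all_algebra all_field.
Set Implicit Arguments.
Unset Strict Implicit.
Unset Printing Implicit Defensive.
Import GRing.Theory Num.Theory.
Local Open Scope ring_scope.

Section QDefs.
Variables (A : finZmodType) (p k : nat).

(* basis index of the Hilbert space: pairs (x, b), x in A^k, b in Z_p^k *)
Definition idxT := ({ffun 'I_k -> A} * {ffun 'I_k -> 'I_p})%type.
Definition dimH := #|{: idxT}|.
Definition opH := 'M[algC]_dimH.

Definition is_character (psi : A -> algC) : Prop :=
  psi 0 = 1 /\ forall y z, psi (y + z) = psi y * psi z.

Definition Phi (phi : A -> A) (b : nat) (d : A) : A := \sum_(i < b) iter i phi d.

Definition Phihat_vec (Phihat : nat -> A -> A)
  (b : {ffun 'I_k -> 'I_p}) (x : {ffun 'I_k -> A}) : A :=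
  \sum_(j < k) Phihat (nat_of_ord (b j)) (x j).

Definition Sset Phihat (x : {ffun 'I_k -> A}) (w : A) : {set {ffun 'I_k -> 'I_p}} :=
  [set b | Phihat_vec Phihat b x == w].

Definition eta Phihat x w : nat := #|Sset Phihat x w|.

(* the vector |x, S^x_w> (normalized uniform superposition; zero if S^x_w is empty) *)
Definition ket Phihat (x : {ffun 'I_k -> A}) (w : A) (t : idxT) : algC :=
  if (t.1 == x) && (t.2 \in Sset Phihat x w)
  then (sqrtC (eta Phihat x w)%:R)^-1 else 0.

Definition outer (u v : idxT -> algC) : opH :=
  \matrix_(i, j) (u (enum_val i) * (v (enum_val j))^*).

Definition sigma (chi : A -> A -> algC) Phihat (d : A) : opH :=
  ((p * #|A|) ^ k)%:R^-1 *:
  \sum_(x : {ffun 'I_k -> A}) \sum_(w : A) \sum_(v : A)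
     ((chi w d * (chi v d)^* * sqrtC (eta Phihat x w * eta Phihat x v)%:R)
        *: outer (ket Phihat x w) (ket Phihat x v)).

Definition Eop (chi : A -> A -> algC) Phihat (j : A) : opH :=
  (#|A|%:R)^-1 *:
  \sum_(x : {ffun 'I_k -> A}) \sum_(w : A) \sum_(v : A)
     ((chi w j * (chi v j)^*) *: outer (ket Phihat x w) (ket Phihat x v)).

Definition adjmx (M : opH) : opH := (map_mx (fun z : algC => z^*) M)^T.

Definition psd (M : opH) : Prop :=
  forall v : 'cV[algC]_dimH, 0 <= ((map_mx (fun z : algC => z^*) v)^T *m M *m v) 0 0.

Definition povm (F : A -> opH) : Prop :=
  (forall j, psd (F j)) /\ \sum_(j : A) F j = 1%:M.

Definition avg_success (F sig : A -> opH) : algC :=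
  (#|A|%:R)^-1 * \sum_(j : A) \tr (F j *m sig j).

Definition orth_proj_onto_range (P S : opH) : Prop :=
  P *m P = P /\ adjmx P = P /\ (P^T == S^T)%MS.

End QDefs.

(* Write e_xj := sum_w chi_w(j) |x,S^x_w> and s_xj := sum_w chi_w(j) sqrt(eta^x_w) |x,S^x_w>,
   so that E_j = |A|^-1 sum_x |e_xj><e_xj| and sigma_j = |G|^-k sum_x |s_xj><s_xj|.
   The kets |x,S^x_w> with eta^x_w > 0 are orthonormal, so by the orthogonality of
   characters sum_j E_j is the projector onto their span, on which sum_j sigma_j is
   diagonal with positive entries.  With R_x := sum_w sqrt(eta^x_w), Cauchy-Schwarz gives
   <s_xj|F|s_xj> <= R_x sum_w sqrt(eta^x_w) <x,S^x_w|F|x,S^x_w>; summing over j with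
   sum_j F_j = 1 bounds the success probability of every POVM by |A|^-1 |G|^-k sum_x R_x^2,
   and E attains this bound because <s_xj|e_yj> = [x = y] R_x. *)

From Pilot Require Import Defs.
From mathcomp Require Import all_boot all_order all_algebra all_field.
From mathcomp Require Import fingroup cyclic.
From mathcomp Require Import ring.
From Stdlib Require Import FunctionalExtensionality.
Import Order.TTheory GRing.Theory Num.Theory.
Local Open Scope ring_scope.
Set Implicit Arguments.
Unset Strict Implicit.

Section SesquilinearForm.
Variable T : finType.
Local Notation mx := 'M[algC]_#|T|.

Definition form (M : mx) (u v : T -> algC) : algC :=
  \sum_i \sum_j (u (enum_val i))^* * M i j * v (enum_val j).

Definition dotC (u v : T -> algC) : algC := \sum_t (u t)^* * v t.

Lemma dotC_conj u v : (dotC u v)^* = dotC v u.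
Proof.
rewrite /dotC rmorph_sum; apply: eq_bigr => t _.
by rewrite rmorphM /= conjCK mulrC.
Qed.

Lemma dotC_enum u v : dotC u v = \sum_(i < #|T|) (u (enum_val i))^* * v (enum_val i).
Proof. by rewrite /dotC -(big_enum_val (fun t => (u t)^* * v t)). Qed.

Lemma form1 u v : form 1%:M u v = dotC u v.
Proof.
rewrite dotC_enum /form; apply: eq_bigr => i _.
rewrite (bigD1 i) //= big1 => [|j nji]; last by rewrite mxE eq_sym (negPf nji) mulr0 mul0r.
by rewrite mxE eqxx mulr1 addr0.
Qed.

Lemma formZ c M u v : form (c *: M) u v = c * form M u v.
Proof.
rewrite /form big_distrr; apply: eq_bigr => i _; rewrite big_distrr.
by apply: eq_bigr => j _; rewrite mxE /= !mulrA (mulrC _ c).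
Qed.

Lemma form_sum (I : finType) (F : I -> mx) u v :
  form (\sum_l F l) u v = \sum_l form (F l) u v.
Proof.
rewrite /form [RHS]exchange_big; apply: eq_bigr => i _; rewrite [RHS]exchange_big.
apply: eq_bigr => j _; rewrite summxE big_distrr big_distrl.
by apply: eq_bigr.
Qed.

Lemma eq_form M u u' v v' : u =1 u' -> v =1 v' -> form M u v = form M u' v'.
Proof.
move=> eq_u eq_v; rewrite /form; apply: eq_bigr => i _; apply: eq_bigr => j _.
by rewrite eq_u eq_v.
Qed.

Lemma form_lincomb (I J : finType) M (c : I -> algC) (d : J -> algC) u v :
  form M (fun t => \sum_a c a * u a t) (fun t => \sum_b d b * v b t)
  = \sum_a \sum_b (c a)^* * d b * form M (u a) (v b).
Proof.
rewrite /form.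
transitivity (\sum_i \sum_j \sum_a \sum_b
   (c a)^* * d b * ((u a (enum_val i))^* * M i j * v b (enum_val j))).
  apply: eq_bigr => i _; apply: eq_bigr => j _.
  rewrite rmorph_sum big_distrl big_distrl; apply: eq_bigr => a _.
  rewrite big_distrr; apply: eq_bigr => b _ /=.
  by rewrite rmorphM; ring.
under eq_bigr do rewrite exchange_big; rewrite exchange_big.
apply: eq_bigr => a _; under eq_bigr do rewrite exchange_big; rewrite exchange_big.
apply: eq_bigr => b _; rewrite big_distrr; apply: eq_bigr => i _.
by rewrite big_distrr.
Qed.

Lemma form_scale M (a b : algC) u v :
  form M (fun t => a * u t) (fun t => b * v t) = a^* * b * form M u v.
Proof.
rewrite /form big_distrr; apply: eq_bigr => i _; rewrite big_distrr.
by apply: eq_bigr => j _ /=; rewrite rmorphM /=; ring.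
Qed.

(* Lagrange's identity: twice the defect of the inequality is the sum over all
   pairs (a, b) of the form evaluated at  g_b^* u_a - g_a^* u_b. *)
Lemma form_cauchy_schwarz M (I : finType) (g : I -> algC) (u : I -> T -> algC) :
  (forall v, 0 <= form M v v) ->
  form M (fun t => \sum_i g i * u i t) (fun t => \sum_i g i * u i t)
   <= (\sum_i g i * (g i)^*) * \sum_i form M (u i) (u i).
Proof.
move=> M_ge0; rewrite form_lincomb.
set G := fun a b => form M (u a) (u b).
set Y := fun a b => g b * (g b)^* * G a a - (g a)^* * g b * G a b.
have pair_ge0 a b : 0 <= Y a b + Y b a.
  have := M_ge0 (fun t => \sum_(i : bool) (if i then (g b)^* else - (g a)^*) *
                            (if i then u a else u b) t).
  rewrite form_lincomb !big_bool /= /Y /G !rmorphN /= !conjCK.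
  by congr (0 <= _); ring.
have sum_pairs : \sum_a \sum_b (Y a b + Y b a) = 2 * \sum_a \sum_b Y a b.
  rewrite mulr2n mulrDl mul1r.
  transitivity (\sum_a \sum_b Y a b + \sum_a \sum_b Y b a).
    by rewrite -big_split; apply: eq_bigr => a _; rewrite -big_split.
  by rewrite [X in _ + X = _]exchange_big.
have sum_Y : \sum_a \sum_b Y a b = (\sum_i g i * (g i)^*) * \sum_i G i i
     - \sum_a \sum_b (g a)^* * g b * G a b.
  rewrite mulr_sumr -sumrB; apply: eq_bigr => a _.
  rewrite mulr_suml -sumrB; apply: eq_bigr => b _.
  by rewrite /Y mulrC.
have : 0 <= \sum_a \sum_b (Y a b + Y b a).
  by apply: sumr_ge0 => a _; apply: sumr_ge0 => b _; apply: pair_ge0.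
by rewrite sum_pairs sum_Y pmulr_rge0 ?subr_ge0.
Qed.

End SesquilinearForm.

Section Characters.
Variables (A : finZmodType) (chi : A -> A -> algC).
Hypothesis chi_char : forall x, is_character (chi x).
Hypothesis chi_inj : injective chi.
Hypothesis chiDl : forall x x' y, chi (x + x') y = chi x y * chi x' y.
Hypothesis chiC : forall x y, chi x y = chi y x.

Lemma chi0r x : chi x 0 = 1. Proof. by case: (chi_char x). Qed.

Lemma chi0l y : chi 0 y = 1. Proof. by rewrite chiC chi0r. Qed.

Lemma chiDr x y z : chi x (y + z) = chi x y * chi x z.
Proof. by case: (chi_char x) => _ ->. Qed.

Lemma chiMnr x y m : chi x (y *+ m) = chi x y ^+ m.
Proof.
elim: m => [|m IHm]; first by rewrite mulr0n chi0r expr0.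
by rewrite mulrS chiDr IHm exprS.
Qed.

(* Character values are #|A|-th roots of unity, hence of modulus one. *)
Lemma chi_mul_conj x y : chi x y * (chi x y)^* = 1.
Proof.
have chi_expA : chi x y ^+ #|A| = 1.
  rewrite -chiMnr -FinRing.zmodXgE.
  have := @expg_cardG _ [set: A]%G y (in_setT y).
  by rewrite cardsT => ->; rewrite chi0r.
have norm_chi : `|chi x y| = 1.
  apply/eqP; rewrite -(@pexpr_eq1 _ _ #|A|) ?normr_ge0 //; last first.
    by apply/card_gt0P; exists 0.
  by rewrite -normrX chi_expA normr1.
by rewrite -normCK norm_chi expr1n.
Qed.

Lemma chi_conj x y : (chi x y)^* = chi (- x) y.
Proof.
have chi_neq0 : chi x y != 0.
  apply/eqP => chi0; have := chi_mul_conj x y.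
  by rewrite chi0 mul0r => /eqP; rewrite eq_sym oner_eq0.
by apply: (mulfI chi_neq0); rewrite chi_mul_conj -chiDl subrr chi0l.
Qed.

(* For u != 0 some value c j0 of c := chi u differs from 1, and translating
   the summation index by j0 gives  sum c = c j0 * sum c. *)
Lemma sum_chi u : \sum_j chi u j = if u == 0 then #|A|%:R else 0.
Proof.
have [->|u_neq0] := eqVneq u 0.
  by under eq_bigr do rewrite chi0l; rewrite sumr_const.
have [j0 chi_j0] : exists j0, chi u j0 != 1.
  apply/existsP; apply: contraR u_neq0 => /existsPn chi_u1.
  apply/eqP/chi_inj/functional_extensionality => j.
  by rewrite chi0l; apply/eqP; rewrite -[_ == _]negbK chi_u1.
have : \sum_j chi u j = chi u j0 * \sum_j chi u j.
  rewrite mulr_sumr (reindex_inj (addrI j0)) /=.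
  by apply: eq_bigr => j _; rewrite chiDr.
move/eqP; rewrite -subr_eq0 -{1}(mul1r (\sum_j _)) -mulrBl mulf_eq0 subr_eq0.
by rewrite eq_sym (negPf chi_j0) => /eqP.
Qed.

Lemma chi_orthogonal w v : \sum_j chi w j * (chi v j)^* = (w == v)%:R * #|A|%:R.
Proof.
under eq_bigr do rewrite chi_conj -chiDl.
by rewrite sum_chi subr_eq0; case: eqP; rewrite ?mul1r ?mul0r.
Qed.

End Characters.

Section OuterProduct.
Variables (A : finZmodType) (p k : nat).
Local Notation T := (idxT A p k).
Local Notation op := (opH A p k).

Lemma mxtrace_mul_outer (M : op) (a b : T -> algC) :
  \tr (M *m outer a b) = form M b a.
Proof.
rewrite /mxtrace /form; apply: eq_bigr => i _; rewrite mxE.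
by apply: eq_bigr => j _; rewrite mxE; ring.
Qed.

Lemma form_outer (a b u v : T -> algC) : form (outer a b) u v = dotC u a * dotC b v.
Proof.
rewrite /form !dotC_enum big_distrl.
apply: eq_bigr => i _; rewrite big_distrr.
by apply: eq_bigr => j _; rewrite mxE /=; ring.
Qed.

Lemma mul_outer (a b c d : T -> algC) : outer a b *m outer c d = dotC b c *: outer a d.
Proof.
apply/matrixP => i j; rewrite !mxE dotC_enum big_distrl.
by apply: eq_bigr => l _ /=; rewrite !mxE; ring.
Qed.

Lemma psd_form (M : op) : psd M <-> forall u, 0 <= form M u u.
Proof.
have quadE (v : 'cV_(dimH A p k)) :
    ((map_mx (fun z : algC => z^*) v)^T *m M *m v) 0 0 =
    form M (fun t => v (enum_rank t) 0) (fun t => v (enum_rank t) 0).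
  rewrite mxE /form exchange_big; apply: eq_bigr => j _.
  rewrite mxE big_distrl; apply: eq_bigr => i _.
  by rewrite !mxE !enum_valK.
split=> [M_psd u | form_ge0 v]; last by rewrite quadE.
have := M_psd (\col_i u (enum_val i)); rewrite quadE.
by rewrite (@eq_form _ M _ u _ u) // => t; rewrite mxE enum_rankK.
Qed.

Lemma form_sum_outer (I : finType) (f : I -> T -> algC) u :
  form (\sum_i outer (f i) (f i)) u u = \sum_i dotC u (f i) * (dotC u (f i))^*.
Proof. by rewrite form_sum; apply: eq_bigr => i _; rewrite form_outer dotC_conj. Qed.

Lemma psd_scale_sum_outer (I : finType) (c : algC) (f : I -> T -> algC) :
  0 <= c -> psd (c *: \sum_i outer (f i) (f i)).
Proof.
move=> c_ge0; apply/psd_form => u; rewrite formZ form_sum_outer mulr_ge0 //.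
by apply: sumr_ge0 => i _; apply: mul_conjC_ge0.
Qed.

End OuterProduct.

Section Kets.
Variables (A : finZmodType) (p k : nat) (Phihat : nat -> A -> A).
Local Notation T := (idxT A p k).
Local Notation op := (opH A p k).
Local Notation X := {ffun 'I_k -> A}.
Local Notation ket := (@Defs.ket A p k Phihat).
Local Notation eta := (Defs.eta p Phihat).

Lemma ket_eta0 x w t : eta x w = 0%N -> ket x w t = 0.
Proof. by move=> eta0; rewrite /ket eta0 sqrtC0 invr0; case: ifP. Qed.

Lemma outer_ket_eta0 x w y v : eta x w = 0%N -> outer (ket x w) (ket y v) = 0.
Proof. by move=> eta0; apply/matrixP => i j; rewrite !mxE ket_eta0 // mul0r. Qed.

Lemma dotC_ket_orth x w y v :
  ~~ ((x == y) && (w == v)) -> dotC (ket x w) (ket y v) = 0.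
Proof.
move=> xw_neq; rewrite /dotC big1 // => t _; rewrite /ket.
case: ifP => [/andP[/eqP tx]|]; last by rewrite conjC0 mul0r.
rewrite /Sset inE => /eqP tw; case: ifP => [/andP[/eqP ty]|]; last by rewrite mulr0.
by rewrite inE => /eqP tv; rewrite -tw -tv -tx -ty !eqxx in xw_neq.
Qed.

Lemma dotC_ket_norm x w : dotC (ket x w) (ket x w) = (0 < eta x w)%N%:R.
Proof.
rewrite /dotC -(pair_big xpredT xpredT (fun a b => (ket x w (a, b))^* * ket x w (a, b))).
rewrite (bigD1 x) //= [X in _ + X]big1 => [|a a_neq]; last first.
  by apply: big1 => b _; rewrite /ket /= (negPf a_neq) conjC0 mul0r.
rewrite addr0 (bigID (mem (Sset p Phihat x w))) /= [X in _ + X]big1; last first.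
  move=> b b_notin.
  by rewrite /ket /= eqxx (negPf b_notin) conjC0 mul0r.
rewrite addr0 (eq_bigr (fun _ => (eta x w)%:R^-1)) => [|b b_in]; last first.
  rewrite /ket /= eqxx b_in geC0_conj ?invr_ge0 ?sqrtC_ge0 ?ler0n //.
  by rewrite -expr2 exprVn sqrtCK.
rewrite sumr_const -/(Defs.eta p Phihat x w).
have [->|eta_gt0] := posnP (eta x w); first by rewrite mulr0n.
by rewrite -[LHS]mulr_natr mulVf // pnatr_eq0 -lt0n.
Qed.

Lemma dotC_ket x w y v :
  dotC (ket x w) (ket y v) = ((x == y) && (w == v) && (0 < eta x w)%N)%:R.
Proof.
have [/andP[/eqP<- /eqP<-] | xw_neq] := boolP ((x == y) && (w == v)).
  exact: dotC_ket_norm.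
by rewrite dotC_ket_orth.
Qed.

Definition ket_comb (x : X) (a : A -> algC) : T -> algC :=
  fun t => \sum_w a w * ket x w t.

Lemma outer_ket_comb x a b :
  \sum_w \sum_v (a w * (b v)^*) *: outer (ket x w) (ket x v)
  = outer (ket_comb x a) (ket_comb x b).
Proof.
apply/matrixP => i j; rewrite summxE mxE /ket_comb rmorph_sum big_distrl.
apply: eq_bigr => w _; rewrite summxE big_distrr; apply: eq_bigr => v _ /=.
by rewrite !mxE rmorphM /=; ring.
Qed.

Lemma dotC_ket_comb x y a b : dotC (ket_comb x a) (ket_comb y b) =
  (x == y)%:R * \sum_w (a w)^* * b w * (0 < eta x w)%N%:R.
Proof.
rewrite -form1 form_lincomb mulr_sumr; apply: eq_bigr => w _.
rewrite (bigD1 w) //= big1 => [|v v_neq]; last first.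
  by rewrite form1 dotC_ket [w == v]eq_sym (negPf v_neq) andbF mulr0.
by rewrite addr0 form1 dotC_ket eqxx andbT; case: (x == y); rewrite /= ?mul1r ?mul0r ?mulr0.
Qed.

Definition ket_diag (l : X -> A -> algC) : op :=
  \sum_x \sum_w l x w *: outer (ket x w) (ket x w).

Lemma ket_diagM l m : ket_diag l *m ket_diag m = ket_diag (fun x w => l x w * m x w).
Proof.
rewrite /ket_diag mulmx_suml; apply: eq_bigr => x _.
rewrite mulmx_suml; apply: eq_bigr => w _.
rewrite mulmx_sumr (bigD1 x) //= [X in _ + X]big1 => [|y y_neq]; last first.
  rewrite mulmx_sumr big1 // => v _.
  rewrite -scalemxAl -scalemxAr mul_outer dotC_ket [x == y]eq_sym (negPf y_neq).
  by rewrite scale0r !scaler0.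
rewrite addr0 mulmx_sumr (bigD1 w) //= [X in _ + X]big1 => [|v v_neq]; last first.
  rewrite -scalemxAl -scalemxAr mul_outer dotC_ket [w == v]eq_sym (negPf v_neq) andbF.
  by rewrite scale0r !scaler0.
rewrite addr0 -scalemxAl -scalemxAr mul_outer dotC_ket !eqxx /= scalerA.
have [eta0|] := posnP (eta x w); last by rewrite scale1r.
by rewrite outer_ket_eta0 // !scaler0.
Qed.

Lemma eq_ket_diag l m :
  (forall x w, (0 < eta x w)%N -> l x w = m x w) -> ket_diag l = ket_diag m.
Proof.
move=> eq_lm; apply: eq_bigr => x _; apply: eq_bigr => w _.
have [eta0|eta_gt0] := posnP (eta x w); last by rewrite eq_lm.
by rewrite outer_ket_eta0 // !scaler0.
Qed.

Lemma adjmx_ket_diag l : adjmx (ket_diag l) = ket_diag (fun x w => (l x w)^*).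
Proof.
apply/matrixP => i j; rewrite !mxE /ket_diag !summxE rmorph_sum; apply: eq_bigr => x _.
rewrite !summxE rmorph_sum; apply: eq_bigr => w _.
by rewrite !mxE !rmorphM /= conjCK; congr (_ * _); rewrite mulrC.
Qed.

End Kets.

Lemma sum_delta_scaler (V : lmodType algC) (I : finType) (i0 : I)
    (g : I -> algC) (v : I -> V) :
  \sum_i ((i0 == i)%:R * g i) *: v i = g i0 *: v i0.
Proof.
rewrite (bigD1 i0) //= big1 => [|i i_neq]; last by rewrite eq_sym (negPf i_neq) mul0r scale0r.
by rewrite eqxx mul1r addr0.
Qed.

Section Measurement.
Variables (A : finZmodType) (p k : nat) (Phihat : nat -> A -> A) (chi : A -> A -> algC).
Hypothesis chi_char : forall x, is_character (chi x).
Hypothesis chi_inj : injective chi.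
Hypothesis chiDl : forall x x' y, chi (x + x') y = chi x y * chi x' y.
Hypothesis chiC : forall x y, chi x y = chi y x.
Local Notation T := (idxT A p k).
Local Notation op := (opH A p k).
Local Notation X := {ffun 'I_k -> A}.
Local Notation ket := (@Defs.ket A p k Phihat).
Local Notation eta := (Defs.eta p Phihat).
Local Notation ket_comb := (@ket_comb A p k Phihat).
Local Notation ket_diag := (@ket_diag A p k Phihat).
Local Notation E := (Eop p k chi Phihat).
Local Notation sig := (sigma p k chi Phihat).

Definition chi_comb (x : X) (j : A) (a : A -> algC) : T -> algC :=
  ket_comb x (fun w => chi w j * a w).

Definition sqrt_eta (x : X) (w : A) : algC := sqrtC (eta x w)%:R.

Local Notation evec x j := (chi_comb x j (fun=> 1)).
Local Notation svec x j := (chi_comb x j (sqrt_eta x)).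

Lemma sqrt_eta_conj x w : (sqrt_eta x w)^* = sqrt_eta x w.
Proof. by rewrite geC0_conj // sqrtC_ge0 ler0n. Qed.

Definition cardGk : algC := ((p * #|A|) ^ k)%:R.

Lemma cardA_neq0 : #|A|%:R != 0 :> algC.
Proof. by rewrite pnatr_eq0 -lt0n; apply/card_gt0P; exists 0. Qed.

Lemma sum_outer_chi_comb x (a b : A -> algC) :
  \sum_j outer (chi_comb x j a) (chi_comb x j b)
  = #|A|%:R *: \sum_w (a w * (b w)^*) *: outer (ket x w) (ket x w).
Proof.
under eq_bigr do rewrite -outer_ket_comb.
rewrite scaler_sumr exchange_big; apply: eq_bigr => w _.
rewrite scalerA exchange_big.
rewrite -(sum_delta_scaler w (fun v => #|A|%:R * (a w * (b v)^*))
                          (fun v => outer (ket x w) (ket x v))).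
apply: eq_bigr => v _; rewrite -scaler_suml mulrA.
rewrite -(chi_orthogonal chi_char chi_inj chiDl chiC).
congr (_ *: _); rewrite !mulr_suml; apply: eq_bigr => j _.
by rewrite rmorphM /=; ring.
Qed.

Lemma Eop_outer j : E j = #|A|%:R^-1 *: \sum_x outer (evec x j) (evec x j).
Proof.
rewrite /Eop; congr (_ *: _); apply: eq_bigr => x _; rewrite -outer_ket_comb.
by apply: eq_bigr => w _; apply: eq_bigr => v _; rewrite !mulr1.
Qed.

Lemma sigma_outer d : sig d = cardGk^-1 *: \sum_x outer (svec x d) (svec x d).
Proof.
rewrite /sigma; congr (_ *: _); apply: eq_bigr => x _; rewrite -outer_ket_comb.
apply: eq_bigr => w _; apply: eq_bigr => v _; congr (_ *: _).
by rewrite [in RHS]rmorphM /= sqrt_eta_conj /sqrt_eta natrM sqrtCM ?nnegrE ?ler0n //; ring.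
Qed.

Lemma psd_Eop j : psd (E j).
Proof. by rewrite Eop_outer; apply: psd_scale_sum_outer; rewrite invr_ge0 ler0n. Qed.

Lemma sum_Eop : \sum_j E j = ket_diag (fun _ _ => 1).
Proof.
under eq_bigr do rewrite Eop_outer.
rewrite -scaler_sumr exchange_big /= scaler_sumr; apply: eq_bigr => x _.
rewrite sum_outer_chi_comb scalerA mulVf ?cardA_neq0 // scale1r.
by apply: eq_bigr => w _; rewrite conjC1 mulr1.
Qed.

Lemma sum_sigma : \sum_d sig d = ket_diag (fun x w => cardGk^-1 * #|A|%:R * (eta x w)%:R).
Proof.
under eq_bigr do rewrite sigma_outer.
rewrite -scaler_sumr exchange_big /= scaler_sumr; apply: eq_bigr => x _.
rewrite sum_outer_chi_comb scalerA scaler_sumr; apply: eq_bigr => w _.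
by rewrite scalerA sqrt_eta_conj -expr2 sqrtCK.
Qed.

Lemma sum_Eop_orth_proj : (0 < p)%N -> orth_proj_onto_range (\sum_j E j) (\sum_j sig j).
Proof.
move=> p_gt0; rewrite sum_Eop sum_sigma.
have cardGk_neq0 : cardGk != 0.
  by rewrite pnatr_eq0 -lt0n expn_gt0 muln_gt0 p_gt0 lt0n -(pnatr_eq0 algC) cardA_neq0.
set l := fun x w => cardGk^-1 * _ * _.
have projE : ket_diag (fun _ _ => 1) = ket_diag l *m ket_diag (fun x w => (l x w)^-1).
  rewrite ket_diagM; apply: eq_ket_diag => x w eta_gt0; rewrite mulfV // /l.
  by rewrite !mulf_neq0 ?invr_eq0 ?cardA_neq0 // pnatr_eq0 -lt0n.
have sigmaE : ket_diag l = ket_diag (fun _ _ => 1) *m ket_diag l.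
  by rewrite ket_diagM; apply: eq_ket_diag => x w _; rewrite mul1r.
split; [|split].
- by rewrite ket_diagM; apply: eq_ket_diag => x w _; rewrite mulr1.
- by rewrite adjmx_ket_diag; apply: eq_ket_diag => x w _; rewrite conjC1.
- by apply/andP; split; [rewrite {1}projE | rewrite {1}sigmaE]; rewrite trmx_mul submxMl.
Qed.

Lemma mxtrace_mul_sigma F d : \tr (F *m sig d) =
  cardGk^-1 * \sum_x form F (svec x d) (svec x d).
Proof.
rewrite sigma_outer -scalemxAr mxtraceZ mulmx_sumr raddf_sum; congr (_ * _).
by apply: eq_bigr => x _; rewrite -mxtrace_mul_outer.
Qed.

Lemma avg_success_ge0 (G : A -> op) : (forall j, psd (G j)) -> 0 <= avg_success G sig.
Proof.
move=> G_psd; rewrite /avg_success mulr_ge0 ?invr_ge0 ?ler0n //.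
apply: sumr_ge0 => j _; rewrite mxtrace_mul_sigma mulr_ge0 ?invr_ge0 ?ler0n //.
by apply: sumr_ge0 => x _; apply: (psd_form _).1.
Qed.

Definition eta_rootsum (x : X) : algC := \sum_w sqrt_eta x w.

Lemma sqrt_eta_supp x w : sqrt_eta x w * (0 < eta x w)%N%:R = sqrt_eta x w.
Proof. by rewrite /sqrt_eta; have [->|] := posnP (eta x w); rewrite ?sqrtC0 ?mul0r ?mulr1. Qed.

Lemma dotC_state_povm x y j :
  dotC (svec x j) (evec y j) = (x == y)%:R * eta_rootsum x.
Proof.
rewrite dotC_ket_comb; congr (_ * _); apply: eq_bigr => w _.
rewrite rmorphM /= sqrt_eta_conj.
transitivity (chi w j * (chi w j)^* * (sqrt_eta x w * (0 < eta x w)%N%:R)); first by ring.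
by rewrite chi_mul_conj // mul1r sqrt_eta_supp.
Qed.

Lemma form_Eop_state j x :
  form (E j) (svec x j) (svec x j) = #|A|%:R^-1 * eta_rootsum x ^+ 2.
Proof.
rewrite Eop_outer formZ form_sum_outer; congr (_ * _).
rewrite (bigD1 x) //= big1 => [|y y_neq]; last first.
  by rewrite dotC_state_povm eq_sym (negPf y_neq) !mul0r.
rewrite addr0 dotC_state_povm eqxx mul1r geC0_conj ?expr2 //.
by apply: sumr_ge0 => w _; rewrite sqrtC_ge0 ler0n.
Qed.

Lemma avg_success_Eop :
  avg_success E sig = #|A|%:R^-1 * (cardGk^-1 * \sum_x eta_rootsum x ^+ 2).
Proof.
rewrite /avg_success; congr (_ * _).
under eq_bigr do rewrite mxtrace_mul_sigma.
under eq_bigr do under eq_bigr do rewrite form_Eop_state.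
under eq_bigr do rewrite -mulr_sumr mulrCA.
by rewrite sumr_const (_ : #|xpredT| = #|A|) // -[LHS]mulr_natl mulVKf ?cardA_neq0.
Qed.

(* Cauchy-Schwarz, with each weight  sqrt_eta x w  split evenly between the two factors. *)
Lemma form_state_le F j x : (forall u, 0 <= form F u u) ->
  form F (svec x j) (svec x j)
  <= eta_rootsum x * \sum_w sqrt_eta x w * form F (ket x w) (ket x w).
Proof.
move=> F_ge0; pose r w := sqrtC (sqrt_eta x w).
have rr w : r w * r w = sqrt_eta x w by rewrite -expr2 sqrtCK.
have r_conj w : (r w)^* = r w by rewrite geC0_conj // sqrtC_ge0 sqrtC_ge0 ler0n.
have stateE : chi_comb x j (sqrt_eta x) =1 fun t => \sum_w (chi w j * r w) * (r w * ket x w t).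
  by move=> t; apply: eq_bigr => w _; rewrite -rr; ring.
have weightsE : eta_rootsum x = \sum_w (chi w j * r w) * (chi w j * r w)^*.
  by apply: eq_bigr => w _; rewrite rmorphM /= r_conj mulrACA chi_mul_conj // mul1r rr.
have termsE : \sum_w sqrt_eta x w * form F (ket x w) (ket x w) =
    \sum_w form F (fun t => r w * ket x w t) (fun t => r w * ket x w t).
  by apply: eq_bigr => w _; rewrite form_scale r_conj rr.
by rewrite (eq_form _ stateE stateE) weightsE termsE; apply: form_cauchy_schwarz.
Qed.

Lemma avg_success_le F : povm F ->
  avg_success F sig <= #|A|%:R^-1 * (cardGk^-1 * \sum_x eta_rootsum x ^+ 2).
Proof.
case=> F_psd F_sum; rewrite /avg_success ler_wpM2l ?invr_ge0 ?ler0n //.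
have trace_le j : \tr (F j *m sig j) <=
    cardGk^-1 * \sum_x eta_rootsum x * \sum_w sqrt_eta x w * form (F j) (ket x w) (ket x w).
  rewrite mxtrace_mul_sigma ler_wpM2l ?invr_ge0 ?ler0n //; apply: ler_sum => x _.
  exact/form_state_le/(psd_form _).1.
apply: le_trans (ler_sum _ (fun j _ => trace_le j)) _.
rewrite -mulr_sumr exchange_big le_eqVlt; apply/predU1l; congr (_ * _).
apply: eq_bigr => x _; rewrite -mulr_sumr exchange_big /= expr2; congr (_ * _).
apply: eq_bigr => w _; rewrite -mulr_sumr -form_sum F_sum form1 dotC_ket !eqxx.
exact: sqrt_eta_supp.
Qed.

End Measurement.

Lemma avg_successD (A : finZmodType) (p k : nat) (E G sig : A -> opH A p k) :
  avg_success (fun j => E j + G j) sig = avg_success E sig + avg_success G sig.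
Proof.
rewrite /avg_success -mulrDr -big_split; congr (_ * _); apply: eq_bigr => j _.
by rewrite mulmxDl mxtraceD.
Qed.

Theorem mainTheorem7
  (A : finZmodType) (p : nat) (phi : A -> A) (k : nat)
  (chi : A -> A -> algC) (Phihat : nat -> A -> A) :
  prime p ->
  (forall y z, phi (y + z) = phi y + phi z) ->
  bijective phi ->
  (forall y, iter p phi y = y) ->
  (0 < k)%N ->
  (forall x, is_character (chi x)) ->
  injective chi ->
  (forall psi : A -> algC, is_character psi -> exists x, chi x =1 psi) ->
  (forall x x' y, chi (x + x') y = chi x y * chi x' y) ->
  (forall x y, chi x y = chi y x) ->
  (forall b : nat, (b < p)%N -> forall x d,
       chi x (Phi phi b d) = chi (Phihat b x) d) ->
  let sig := sigma p k chi Phihat in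
  let E := Eop p k chi Phihat in
  [/\ (* {E_j} is a POVM on the support of Sigma = sum_j sigma_j *)
      (forall j, psd (E j)),
      orth_proj_onto_range (\sum_(j : A) E j) (\sum_(j : A) sig j)
    & (* any completion of {E_j} on the orthogonal complement is optimal *)
      forall G : A -> opH A p k,
        (forall j, psd (G j)) ->
        \sum_(j : A) (E j + G j) = 1%:M ->
        forall F : A -> opH A p k, povm F ->
          avg_success F sig <= avg_success (fun j => E j + G j) sig].
Proof.
move=> p_prime _ _ _ _ chi_char chi_inj _ chiDl chiC _ sig E.
split=> [j | | G G_psd _ F F_povm].
- exact: psd_Eop.
- exact/sum_Eop_orth_proj/prime_gt0.
- rewrite avg_successD avg_success_Eop //.
  apply: le_trans (avg_success_le _ chi_char F_povm) _.
  by rewrite lerDl; apply: avg_success_ge0.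
Qed.
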